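(* Let $p_1,\dots,p_m\in\mathbb R$, let $\sigma$ be any permutation with $p_{\sigma(1)}\le\dots\le p_{\sigma(m)}$, $p_{(k)}=p_{\sigma(k)}$, $R_k=\{\sigma(1),\dots,\sigma(k)\}$, $R_k^\dagger=\{i:p_i\le p_{(k)}\}$, and let $f:\mathbb R\to\mathbb R$ be any function. Consider the reference families $\mathfrak R=(R_k,f(p_{(k)})\wedge k)_{1\le k\le m}$, $\mathfrak R^\sim=(R_k,f(p_{(k)}))_{1\le k\le m}$ and $\mathfrak R^\dagger=(R_k^\dagger,f(p_{(k)}))_{1\le k\le m}$. Then for all $S\subseteq\{1,\dots,m\}$, $$\hat V^{\mathrm{JER}}_{\mathfrak R}(S)=\hat V^{\mathrm{JER}}_{\mathfrak R^\sim}(S)=\hat V^{\mathrm{JER}}_{\mathfrak R^\dagger}(S).$$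
   Context: For a reference family $\mathfrak R=(R_k,\zeta_k)_{k\in\mathcal K}$ (subsets $R_k\subseteq\{1,\dots,m\}$, reals $\zeta_k$): $\mathfrak A(\mathfrak R)=\{A\subseteq\{1,\dots,m\}:\forall k\in\mathcal K,\ |R_k\cap A|\le\zeta_k\}$ and $\hat V^{\mathrm{JER}}_{\mathfrak R}(S)=\max_{A\in\mathfrak A(\mathfrak R)}|S\cap A|$ (the statement is understood with any fixed convention for the maximum over an empty set). *)

From mathcomp Require Import all_boot all_order all_algebra all_fingroup.
Set Implicit Arguments. Unset Strict Implicit. Unset Printing Implicit Defensive.
Import Order.TTheory GRing.Theory Num.Theory.
Local Open Scope ring_scope.

(* Indices {1,...,m} are represented by 'I_m (i.e. {0,...,m-1}). *)

Definition JER_adm (R : realFieldType) (m : nat) (K : finType)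
  (Rk : K -> {set 'I_m}) (zeta : K -> R) : {set {set 'I_m}} :=
  [set A : {set 'I_m} | [forall k : K, (#|Rk k :&: A|%:R <= zeta k)]].

(* V^JER_R(S) = max_{A in A(R)} |S cap A|; convention: max over empty set = 0. *)
Definition V_JER (R : realFieldType) (m : nat) (K : finType)
  (Rk : K -> {set 'I_m}) (zeta : K -> R) (S : {set 'I_m}) : nat :=
  \max_(A in JER_adm Rk zeta) #|S :&: A|.

(* R_k = {sigma(1),...,sigma(k)}; with 0-based index k : 'I_m this is
   {sigma j | j <= k}. *)
Definition Rsorted (m : nat) (sigma : 'S_m) (k : 'I_m) : {set 'I_m} :=
  [set sigma j | j in [set j : 'I_m | (j <= k)%N]].

Definition Rdagger (R : realFieldType) (m : nat) (p : 'I_m -> R) (sigma : 'S_m)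
  (k : 'I_m) : {set 'I_m} :=
  [set i : 'I_m | p i <= p (sigma k)].

(* Capping each threshold at the size of its reference set changes no constraint,
   since [|R_k :&: A| <= |R_k|] always holds, and [|R_k| = k].  For the second
   equality, [R_k] is contained in [R_k^dagger] with the same threshold, while
   [R_k^dagger] is exactly [R_k0] for the last index [k0] tied with [k], whose
   threshold [f (p_(k0)) = f (p_(k))] is the same; so each family's constraints
   imply the other's and both have the same admissible sets. *)
From mathcomp Require Import all_boot all_order all_algebra all_fingroup.
Set Implicit Arguments. Unset Strict Implicit. Unset Printing Implicit Defensive.
Import Order.TTheory GRing.Theory Num.Theory.
Local Open Scope ring_scope.

Section AdmissibleSets.

Variables (R : realFieldType) (m : nat).

Lemma JER_adm_sub (K K' : finType) (Rk : K -> {set 'I_m}) (zeta : K -> R)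
    (Rk' : K' -> {set 'I_m}) (zeta' : K' -> R) :
  (forall k', exists2 k, Rk' k' \subset Rk k & zeta k <= zeta' k') ->
  JER_adm Rk zeta \subset JER_adm Rk' zeta'.
Proof.
move=> dominated; apply/subsetP => A; rewrite !inE => /forallP admA.
apply/forallP => k'; have [k subRk le_zeta] := dominated k'.
apply: le_trans le_zeta; apply: le_trans (admA k).
by rewrite ler_nat subset_leq_card // setSI.
Qed.

Lemma JER_adm_min_cap (K : finType) (Rk : K -> {set 'I_m}) (zeta c : K -> R) :
  (forall k, #|Rk k|%:R <= c k) ->
  JER_adm Rk (fun k => Num.min (zeta k) (c k)) = JER_adm Rk zeta.
Proof.
move=> card_le_c; apply/setP => A; rewrite !inE; apply: eq_forallb => k.
rewrite le_min [_ <= c k](le_trans _ (card_le_c k)) ?andbT //.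
by rewrite ler_nat subset_leq_card ?subsetIl.
Qed.

End AdmissibleSets.

Section SortedReferenceSets.

Variables (R : realFieldType) (m : nat) (p : 'I_m -> R) (sigma : 'S_m).
Hypothesis sorted_p : forall i j : 'I_m, (i <= j)%N -> p (sigma i) <= p (sigma j).

Lemma card_Rsorted (k : 'I_m) : #|Rsorted sigma k| = k.+1.
Proof.
rewrite card_imset; last exact: perm_inj.
have -> : [set j : 'I_m | (j <= k)%N] = widen_ord (ltn_ord k) @: 'I_k.+1.
  apply/setP => j; rewrite inE; apply/idP/imsetP => [j_le_k | [i _ ->]].
    by exists (Ordinal (j_le_k : (j < k.+1)%N)) => //; apply: val_inj.
  exact: ltn_ord i.
rewrite card_imset ?card_ord //.
by move=> i j /(congr1 val) /= /val_inj.
Qed.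

Lemma mem_Rsorted (k j : 'I_m) : (sigma j \in Rsorted sigma k) = (j <= k)%N.
Proof.
apply/imsetP/idP => [[j']|j_le_k]; first by rewrite inE => ? /perm_inj ->.
by exists j; rewrite ?inE.
Qed.

Lemma Rsorted_sub_Rdagger (k : 'I_m) : Rsorted sigma k \subset Rdagger p sigma k.
Proof.
apply/subsetP => i; rewrite -[i](permKV sigma) mem_Rsorted inE.
exact: sorted_p.
Qed.

Lemma Rdagger_last_tie (k : 'I_m) :
  exists2 k0 : 'I_m, Rdagger p sigma k = Rsorted sigma k0 & p (sigma k0) = p (sigma k).
Proof.
have [k0 tie_k0 last_k0] :=
  @arg_maxnP _ k (fun j : 'I_m => p (sigma j) <= p (sigma k)) val (lexx _).
have p_k0 : p (sigma k0) = p (sigma k).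
  by apply/eqP; rewrite eq_le tie_k0 sorted_p //; exact: last_k0.
exists k0 => //; apply/setP => i; rewrite -[i](permKV sigma) mem_Rsorted inE.
apply/idP/idP => [|le_k0]; first exact: last_k0.
by rewrite -p_k0 sorted_p.
Qed.

End SortedReferenceSets.

Theorem mainTheorem20 (R : realFieldType) (m : nat) (p : 'I_m -> R)
  (sigma : 'S_m)
  (hsorted : forall i j : 'I_m, (i <= j)%N -> p (sigma i) <= p (sigma j))
  (f : R -> R) (S : {set 'I_m}) :
  V_JER (Rsorted sigma) (fun k : 'I_m => Num.min (f (p (sigma k))) (k.+1)%:R) S
    = V_JER (Rsorted sigma) (fun k : 'I_m => f (p (sigma k))) S
  /\ V_JER (Rsorted sigma) (fun k : 'I_m => f (p (sigma k))) S
    = V_JER (Rdagger p sigma) (fun k : 'I_m => f (p (sigma k))) S.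
Proof.
split; rewrite /V_JER.
  by rewrite JER_adm_min_cap // => k; rewrite card_Rsorted.
suff -> : JER_adm (Rsorted sigma) (fun k => f (p (sigma k)))
        = JER_adm (Rdagger p sigma) (fun k => f (p (sigma k))) by [].
apply/eqP; rewrite eqEsubset; apply/andP; split; apply: JER_adm_sub => k.
  by have [k0 -> <-] := Rdagger_last_tie hsorted k; exists k0.
by exists k; rewrite ?Rsorted_sub_Rdagger.
Qed.
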